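(* Let $p,q\ge0$, $n=p+q\ge1$. For every $M\in\mathcal{G}^{\mathbb{C}}_{p,q}$, $${\rm rank}(M)={\rm rank}(\widehat{M})={\rm rank}(\widetilde{M})={\rm rank}(\overline{M})={\rm rank}(M^\dagger)={\rm rank}(M^\dagger M)={\rm rank}(MM^\dagger).$$
   Context: Let $\mathcal{G}_{p,q}$ be the real Clifford algebra with identity $e$ and generators $e_1,\dots,e_n$ satisfying $e_ae_b+e_be_a=2\eta_{ab}e$, $\eta={\rm diag}(1,\dots,1,-1,\dots,-1)$ ($p$ ones, $q$ minus ones), basis elements $e_A=e_{a_1}\cdots e_{a_k}$ for $a_1<\dots<a_k$ (grade $k$), and $\mathcal{G}^{\mathbb{C}}_{p,q}=\mathbb{C}\otimes\mathcal{G}_{p,q}$ with elements $M=\sum_A m_Ae_A$, $m_A\in\mathbb{C}$. Let $\langle M\rangle_k$ be the projection onto the span of the grade-$k$ basis elements. Define the grade involution $\widehat{M}=\sum_k(-1)^k\langle M\rangle_k$, the reversion $\widetilde{M}=\sum_k(-1)^{k(k-1)/2}\langle M\rangle_k$, complex conjugation $\overline{M}=\sum_A\overline{m_A}e_A$, and Hermitian conjugation $M^\dagger=\sum_A\overline{m_A}(e_A)^{-1}$. Let $N=2^{\lfloor (n+1)/2\rfloor}$ and let $\beta$ be an algebra isomorphism from $\mathcal{G}^{\mathbb{C}}_{p,q}$ onto ${\rm Mat}(N,\mathbb{C})$ if $n$ is even, and onto the algebra of block-diagonal matrices ${\rm diag}(X,Y)$, $X,Y\in{\rm Mat}(N/2,\mathbb{C})$,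 if $n$ is odd. The rank is ${\rm rank}(M):={\rm rank}(\beta(M))$, independent of the choice of $\beta$. *)

From HB Require Import structures.
From mathcomp Require Import all_boot all_order all_algebra.
From Stdlib Require Import ClassicalEpsilon.
Set Implicit Arguments. Unset Strict Implicit. Unset Printing Implicit Defensive.
Import Order.TTheory GRing.Theory Num.Theory.
Local Open Scope ring_scope.

(* The complexified Clifford algebra G^C_{p,q}, n = p + q, over a numeric
   algebraically closed field C with conjugation z^* (e.g. C = complex numbers).
   An element M = \sum_A m_A e_A is represented by its coefficient function
   A |-> m_A, where A ranges over subsets of {0,..,n-1}; the subset
   A = {a_1 < ... < a_k} stands for the basis element e_A = e_{a_1}...e_{a_k}. *)

Section Clifford.
Variable C : numClosedFieldType.
Variables p q : nat.
Local Notation n := (p + q)%N.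

Definition cl := {ffun {set 'I_n} -> C}.

Definition eta (a : 'I_n) : C := if (a < p)%N then 1 else -1.

Definition cbasis (A : {set 'I_n}) : cl := [ffun B => (B == A)%:R].
Definition cone : cl := cbasis set0.

Definition cadd (M N : cl) : cl := [ffun A : {set 'I_n} => M A + N A].
Definition cscale (c : C) (M : cl) : cl := [ffun A : {set 'I_n} => c * M A].

(* product of basis blades, from e_a e_b + e_b e_a = 2 eta_ab e:
   e_A e_B = (-1)^{#{(a,b) : a in A, b in B, b < a}} (prod_{a in A cap B} eta_aa) e_{A Delta B} *)
Definition blade_sign (A B : {set 'I_n}) : C :=
  (-1) ^+ #|[set ab : 'I_n * 'I_n | (ab.1 \in A) && (ab.2 \in B) && (ab.2 < ab.1)%N]|
  * \prod_(a in A :&: B) eta a.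

Definition symdiff (A B : {set 'I_n}) : {set 'I_n} := (A :\: B) :|: (B :\: A).

Definition cmul (M N : cl) : cl :=
  [ffun D => \sum_(A : {set 'I_n}) \sum_(B : {set 'I_n})
     (if symdiff A B == D then M A * N B * blade_sign A B else 0)].

Definition grade (k : nat) (M : cl) : cl := [ffun A : {set 'I_n} => if #|A| == k then M A else 0].

Definition ginv (M : cl) : cl := [ffun A : {set 'I_n} => (-1) ^+ #|A| * M A].
(* reversion  \tilde M = sum_k (-1)^{k(k-1)/2} <M>_k ; note k(k-1)/2 = 'C(k,2) *)
Definition crev (M : cl) : cl := [ffun A : {set 'I_n} => (-1) ^+ 'C(#|A|, 2) * M A].
Definition cconj (M : cl) : cl := [ffun A : {set 'I_n} => (M A)^*].

Definition binv (A : {set 'I_n}) : cl :=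
  epsilon (inhabits cone)
    (fun X : cl => cmul (cbasis A) X = cone /\ cmul X (cbasis A) = cone).

Definition cherm (M : cl) : cl :=
  \big[cadd/[ffun=> 0]]_(A : {set 'I_n}) cscale ((M A)^*) (binv A).

Definition Ndim : nat := 2 ^ (n.+1)./2.

Definition is_blockdiag (X : 'M[C]_Ndim) : Prop :=
  forall i j : 'I_Ndim, ((i < Ndim %/ 2)%N != (j < Ndim %/ 2)%N) -> X i j = 0.

Definition clifford_iso (beta : cl -> 'M[C]_Ndim) : Prop :=
  (forall M N, beta (cadd M N) = beta M + beta N) /\
  (forall c M, beta (cscale c M) = c *: beta M) /\
  (forall M N, beta (cmul M N) = beta M *m beta N) /\
  beta cone = 1%:M /\
  injective beta /\
  (forall X : 'M[C]_Ndim, (exists M, beta M = X) <-> (if odd n then is_blockdiag X else True)).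

End Clifford.

(* Right multiplication in the blade basis gives the regular representation
   [regmx M], with [regmx (X Y) = regmx X *m regmx Y].  Through [beta] the
   algebra acting on itself on the right becomes Mat(N) acting on itself
   (n even) or pairs of N/2 x N/2 blocks acting on themselves (n odd), so
   rank (regmx M) = c * rank (beta M) with c = N or N/2, and it suffices to
   compare ranks of regular representations.  As (e_A)^-1 = s(A,A) e_A, where
   the blade sign s takes values +-1, regmx (M^dagger) is the conjugate
   transpose of regmx M and regmx (conj M) its entrywise conjugate.
   Reweighting the coefficient of e_A by prod_{a in A} f a with f^2 = 1
   conjugates regmx M by an involutive diagonal matrix, since these weights
   are multiplicative on symmetric differences; the grade involution is such
   a reweighting (f = -1), and so is reversion up to conjugation and
   Hermitian conjugation (f = eta), because
   s(A,A) = (-1)^(k(k-1)/2) prod_{a in A} eta_a.  Finally, with B^H the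
   conjugate transpose, rank (B B^H) = rank B since v B B^H = 0 forces
   |v B|^2 = 0. *)

From Pilot Require Import Defs.
From HB Require Import structures.
From mathcomp Require Import all_boot all_order all_algebra ring.
From Stdlib Require Import ClassicalEpsilon.
Set Implicit Arguments. Unset Strict Implicit. Unset Printing Implicit Defensive.
Import Order.TTheory GRing.Theory Num.Theory.
Local Open Scope ring_scope.
Local Open Scope sesquilinear_scope.

Section MatrixRank.
Variable F : fieldType.

Lemma lin_mx_mulmxrM a b c d (X : 'M[F]_(b, c)) (Z : 'M[F]_(c, d)) :
  lin_mx (@mulmxr F a b d (X *m Z)) =
  lin_mx (@mulmxr F a b c X) *m lin_mx (@mulmxr F a c d Z).
Proof.
by apply/row_matrixP => i; rewrite !rowE mulmxA !mul_rV_lin /= mxvecK mulmxA.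
Qed.

Lemma lin_mx_mulmxr1 a b : lin_mx (@mulmxr F a b b 1%:M) = 1%:M.
Proof.
by apply/row_matrixP => i; rewrite !rowE mul_rV_lin /= mulmx1 vec_mxK mulmx1.
Qed.

Lemma mxrank_lin_mulmxr a b c (A : 'M[F]_(b, c)) :
  \rank (lin_mx (@mulmxr F a b c A)) = (a * \rank A)%N.
Proof.
rewrite -{1}(mulmx_base A) lin_mx_mulmxrM.
have /row_freeP[Z HZ] := row_base_free A.
have /row_fullP[X HX] := col_base_full A.
rewrite mxrankMfree; last first.
  apply/row_freeP; exists (lin_mx (mulmxr Z)).
  by rewrite -lin_mx_mulmxrM HZ lin_mx_mulmxr1.
apply/eqP; apply/row_fullP.
by exists (lin_mx (mulmxr X)); rewrite -lin_mx_mulmxrM HX lin_mx_mulmxr1.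
Qed.

Lemma mxrank_mul_unit n (D X E : 'M[F]_n) :
  D \in unitmx -> E \in unitmx -> \rank (D *m X *m E) = \rank X.
Proof.
by move=> Du Eu; rewrite mxrankMfree ?row_free_unit // eqmxMfull ?row_full_unit.
Qed.

Lemma mxrank_intertwine m k (R : 'M[F]_m) (K : 'M[F]_k) (T : 'M[F]_(m, k)) :
  row_free T -> row_full T -> R *m T = T *m K -> \rank R = \rank K.
Proof. by move=> Tfree Tfull RTK; rewrite -(mxrankMfree R Tfree) RTK eqmxMfull. Qed.

Lemma castmx_mul k l (e : k = l) (A B : 'M[F]_k) :
  castmx (e, e) (A *m B) = castmx (e, e) A *m castmx (e, e) B.
Proof. by case: l / e; rewrite !castmx_id. Qed.

Lemma castmx_linear k l (e : k = l) a (A B : 'M[F]_k) :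
  castmx (e, e) (a *: A + B) = a *: castmx (e, e) A + castmx (e, e) B.
Proof. by case: l / e; rewrite !castmx_id. Qed.

Lemma mxrank_castmx k l (e : k = l) (A : 'M[F]_k) :
  \rank (castmx (e, e) A) = \rank A.
Proof. by case: l / e; rewrite castmx_id. Qed.

End MatrixRank.

Section ConjugateTranspose.
Variable C : numClosedFieldType.

Lemma mxrank_trmxC m n (A : 'M[C]_(m, n)) : \rank (A^t* ) = \rank A.
Proof. by rewrite mxrank_map mxrank_tr. Qed.

Lemma mulmx_trmxC_eq0 n (u : 'rV[C]_n) : u *m u^t* = 0 -> u = 0.
Proof.
move=> uu0; apply/eqP; rewrite -(dnorm_eq0 (@dotmx C n)); apply/eqP.
by have := dotmxE u u; rewrite uu0 mxE.
Qed.

Lemma mxrank_mul_trmxC m n (A : 'M[C]_(m, n)) : \rank (A *m A^t* ) = \rank A.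
Proof.
have := mxrank_mul_ker A (A^t* ).
suff -> : (A :&: kermx (A^t* ))%MS = 0 by rewrite mxrank0 addn0.
apply/row_matrixP => i; rewrite row0; set u := row i _.
have /sub_kermxP uK : (u <= kermx (A^t* ))%MS.
  by rewrite (submx_trans (row_sub _ _)) ?capmxSr.
have /submxP[w uwA] : (u <= A)%MS by rewrite (submx_trans (row_sub _ _)) ?capmxSl.
by apply: mulmx_trmxC_eq0; rewrite [in u^t* ]uwA trmx_mul map_mxM mulmxA uK mul0mx.
Qed.

End ConjugateTranspose.

Lemma card_ltn_pairs k (A : {set 'I_k}) :
  #|[set ab : 'I_k * 'I_k | (ab.1 \in A) && (ab.2 \in A) && (ab.2 < ab.1)%N]| =
  'C(#|A|, 2).
Proof.
rewrite -cards_draws -(@card_in_imset _ _ (fun ab => [set ab.1; ab.2])).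
  apply: eq_card => S; rewrite inE; apply/imsetP/andP => [[[a b]]|].
    rewrite inE /= => /andP[/andP[aA bA] ba] ->.
    rewrite cards2 subUset !sub1set aA bA.
    by split=> //; case: (a =P b) ba => [->|]; rewrite ?ltnn.
  move=> [SA /cards2P[x [y [xy SE]]]].
  have [yx|xy'] := ltnP y x.
    by exists (x, y) => //; rewrite inE /= yx andbT -!sub1set -subUset -SE.
  exists (y, x); last by rewrite /= setUC.
  rewrite inE /= ltn_neqAle xy' andbT -!sub1set -subUset setUC -SE SA.
  by rewrite (inj_eq val_inj).
move=> [a b] [c d]; rewrite !inE /= => /andP[_ ba] /andP[_ dc] E.
have le_max (x y z : 'I_k) : (y < x)%N -> z \in [set x; y] -> (z <= x)%N.
  by move=> yx; rewrite !inE => /orP[]/eqP->; [exact: leqnn | exact: ltnW].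
have ac : a = c.
  apply/val_inj/anti_leq/andP; split.
    by apply: (le_max c d) => //; rewrite -E set21.
  by apply: (le_max a b) => //; rewrite E set21.
have : b \in [set c; d] by rewrite -E set22.
rewrite !inE -ac => /orP[/eqP bc|/eqP ->]; last by rewrite ac.
by rewrite bc ltnn in ba.
Qed.

Section Blades.
Variables (C : numClosedFieldType) (p q : nat).
Local Notation n := (p + q)%N.
Local Notation cl := (cl C p q).
Local Notation e := (cbasis C).
Local Notation sign := (blade_sign C).
Implicit Types (A B D : {set 'I_n}) (M X Y : cl).

Lemma in_symdiff A B x : (x \in symdiff A B) = (x \in A) (+) (x \in B).
Proof. by rewrite !inE; case: (x \in A); case: (x \in B). Qed.

Lemma symdiffK A B : symdiff A (symdiff A B) = B.
Proof. by apply/setP => x; rewrite !in_symdiff addbA addbb. Qed.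

Lemma symdiffC A B : symdiff A B = symdiff B A.
Proof. by apply/setP => x; rewrite !in_symdiff addbC. Qed.

Lemma symdiffA A B D : symdiff A (symdiff B D) = symdiff (symdiff A B) D.
Proof. by apply/setP => x; rewrite !in_symdiff addbA. Qed.

Lemma symdiffvv A : symdiff A A = set0.
Proof. by apply/setP => x; rewrite in_symdiff addbb inE. Qed.

Lemma prod_symdiff (f : 'I_n -> C) : (forall a, f a * f a = 1) ->
  forall A B, \prod_(a in symdiff A B) f a = \prod_(a in A) f a * \prod_(a in B) f a.
Proof.
move=> ff1 A B; rewrite big_mkcond [in RHS]big_mkcond [X in _ * X]big_mkcond.
rewrite -big_split /=.
apply: eq_bigr => a _; rewrite in_symdiff.
by case: (a \in A); case: (a \in B); rewrite ?mulr1 ?mul1r.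
Qed.

Lemma cbasisE A B : e A B = (B == A)%:R.
Proof. by rewrite ffunE. Qed.

Lemma cscaleE c X A : cscale c X A = c * X A.
Proof. by rewrite ffunE. Qed.

Lemma cmulE X Y D :
  cmul X Y D = \sum_A X A * Y (symdiff A D) * sign A (symdiff A D).
Proof.
rewrite ffunE; apply: eq_bigr => A _; rewrite (bigD1 (symdiff A D)) //=.
rewrite symdiffK eqxx big1 ?addr0 // => B nB.
suff /negbTE-> : symdiff A B != D by [].
by apply: contraNneq nB => <-; rewrite symdiffK.
Qed.

Lemma cmulZl c X Y : cmul (cscale c X) Y = cscale c (cmul X Y).
Proof.
apply/ffunP => D; rewrite cscaleE !cmulE mulr_sumr.
by apply: eq_bigr => A _; rewrite cscaleE !mulrA.
Qed.

Lemma cmulZr c X Y : cmul X (cscale c Y) = cscale c (cmul X Y).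
Proof.
apply/ffunP => D; rewrite cscaleE !cmulE mulr_sumr.
by apply: eq_bigr => A _; rewrite cscaleE; ring.
Qed.

Lemma cmul_cbasis A B : cmul (e A) (e B) = cscale (sign A B) (e (symdiff A B)).
Proof.
apply/ffunP => D; rewrite cmulE cscaleE cbasisE (bigD1 A) //= big1 => [|A' nA'].
  rewrite cbasisE eqxx mul1r addr0 cbasisE.
  have [->|nD] := eqVneq D (symdiff A B); first by rewrite symdiffK eqxx mulr1 mul1r.
  rewrite (_ : (_ == B) = false) ?mul0r ?mulr0 //.
  by apply: contraNF nD => /eqP <-; rewrite symdiffK.
by rewrite cbasisE (negbTE nA') !mul0r.
Qed.

Lemma eta_sqr (a : 'I_n) : Defs.eta C a * Defs.eta C a = 1.
Proof. by rewrite /Defs.eta; case: ifP => _; rewrite ?mulrNN mulr1. Qed.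

Lemma blade_sign_sqr A B : sign A B * sign A B = 1.
Proof.
rewrite /blade_sign mulrACA -expr2 -exprM mulnC exprM sqrrN !expr1n mul1r.
by rewrite -big_split big1 // => a _; apply: eta_sqr.
Qed.

Lemma conj_blade_sign A B : (sign A B)^* = sign A B.
Proof.
rewrite /blade_sign rmorphM rmorphXn rmorphN1 rmorph_prod; congr (_ * _).
by apply: eq_bigr => a _; rewrite /Defs.eta; case: ifP; rewrite ?rmorph1 ?rmorphN1.
Qed.

Lemma blade_sign0r A : sign A set0 = 1.
Proof.
rewrite /blade_sign setI0 big_set0 mulr1 -[1](expr0 (-1 : C)); congr (_ ^+ _).
by apply/eqP; rewrite cards_eq0; apply/eqP/setP => ab; rewrite !inE andbF.
Qed.

Lemma blade_signAA A :
  sign A A = (-1) ^+ 'C(#|A|, 2) * \prod_(a in A) Defs.eta C a.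
Proof. by rewrite /blade_sign setIid card_ltn_pairs. Qed.

Definition blade (i : 'I_#|{set 'I_n}|) : {set 'I_n} := enum_val i.

Definition clrow X : 'rV[C]_#|{set 'I_n}| := \row_i X (blade i).

Definition regmx M : 'M[C]_#|{set 'I_n}| :=
  \matrix_(i, j)
    (M (symdiff (blade i) (blade j)) * sign (blade i) (symdiff (blade i) (blade j))).

Lemma clrow_cmul X M : clrow (cmul X M) = clrow X *m regmx M.
Proof.
apply/rowP => j; rewrite !mxE cmulE big_enum_val /=.
by apply: eq_bigr => i _; rewrite !mxE mulrA.
Qed.

Lemma clrow_cbasis i : clrow (e (blade i)) = delta_mx 0 i.
Proof. by apply/rowP => j; rewrite !mxE cbasisE (inj_eq enum_val_inj). Qed.

Lemma row_regmx M i : row i (regmx M) = clrow (cmul (e (blade i)) M).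
Proof. by rewrite clrow_cmul clrow_cbasis rowE. Qed.

Lemma clrowK (r : 'rV[C]_#|{set 'I_n}|) :
  clrow [ffun A : {set 'I_n} => r 0 (enum_rank A)] = r.
Proof. by apply/rowP => i; rewrite mxE ffunE /blade enum_valK. Qed.

Lemma clrow0 : clrow [ffun=> 0] = 0.
Proof. by apply/rowP => i; rewrite !mxE ffunE. Qed.

Definition cflip (f : 'I_n -> C) M : cl :=
  [ffun A : {set 'I_n} => (\prod_(a in A) f a) * M A].

Lemma ginv_cflip M : ginv M = cflip (fun=> -1) M.
Proof. by apply/ffunP => A; rewrite !ffunE prodr_const. Qed.

Lemma mxrank_regmx_cflip (f : 'I_n -> C) M :
  (forall a, f a * f a = 1) -> \rank (regmx (cflip f M)) = \rank (regmx M).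
Proof.
move=> ff1; pose w := diag_mx (\row_i \prod_(a in blade i) f a).
have ww1 : w *m w = 1%:M.
  apply/matrixP => i j; rewrite mul_diag_mx !mxE.
  case: (i =P j) => _; rewrite ?mulr0n ?mulr0 // mulr1n -big_split.
  by rewrite big1 // => a _; apply: ff1.
have /mulmx1_unit[wu _] := ww1.
rewrite -(mxrank_mul_unit (regmx M) wu wu); congr (\rank _).
by apply/matrixP => i j; rewrite mul_mx_diag mul_diag_mx !mxE ffunE prod_symdiff //; ring.
Qed.

Lemma regmx_cconj M : regmx (cconj M) = regmx M ^ Num.conj.
Proof. by apply/matrixP => i j; rewrite !mxE ffunE rmorphM /= conj_blade_sign. Qed.

End Blades.

Section BlockDiagonal.
Variables (C : numClosedFieldType) (p q : nat).
Hypothesis n_odd : odd (p + q).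
Local Notation N := (Ndim p q).
Local Notation h := (Ndim p q %/ 2)%N.

Lemma Ndim_half : N = (h + h)%N.
Proof.
move: n_odd; rewrite /Ndim; case: (p + q)%N => [|k] //= _.
by rewrite expnS mulKn // addnn -mul2n.
Qed.

Local Notation cast := (castmx (Ndim_half, Ndim_half)).

Lemma castmx_blockdiag (Y : 'M[C]_N) :
  is_blockdiag Y -> cast Y = block_mx (ulsubmx (cast Y)) 0 0 (drsubmx (cast Y)).
Proof.
move=> Yd; rewrite -{1}(submxK (cast Y)); congr block_mx;
  by apply/matrixP => i j; rewrite !mxE castmxE Yd //= ltn_ord ltnNge leq_addr.
Qed.

Lemma block_mx_offdiag m (X Y : 'M[C]_m) (i j : 'I_(m + m)) :
  (i < m)%N != (j < m)%N -> block_mx X 0 0 Y i j = 0.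
Proof.
case: (split_ordP i) => a ->; case: (split_ordP j) => b ->;
  by rewrite ?block_mxEul ?block_mxEur ?block_mxEdl ?block_mxEdr ?mxE //=
       ltn_ord ltnNge leq_addr.
Qed.

Lemma is_blockdiag_castmx (X Y : 'M[C]_h) :
  is_blockdiag (castmx (esym Ndim_half, esym Ndim_half) (block_mx X 0 0 Y)).
Proof. by move=> i j ij; rewrite castmxE; apply: block_mx_offdiag. Qed.

End BlockDiagonal.

Section Isomorphism.
Variables (C : numClosedFieldType) (p q : nat).
Local Notation n := (p + q)%N.
Local Notation cl := (cl C p q).
Local Notation e := (cbasis C).
Local Notation sign := (blade_sign C).
Local Notation N := (Ndim p q).
Implicit Types (A B D : {set 'I_n}) (M X Y : cl).

Variable beta : cl -> 'M[C]_N.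
Hypothesis beta_iso : clifford_iso beta.

Let betaD X Y : beta (cadd X Y) = beta X + beta Y := beta_iso.1 X Y.
Let betaZ c X : beta (cscale c X) = c *: beta X := beta_iso.2.1 c X.
Let betaM X Y : beta (cmul X Y) = beta X *m beta Y := beta_iso.2.2.1 X Y.
Let beta1 : beta (cone C p q) = 1%:M := beta_iso.2.2.2.1.
Let beta_inj : injective beta := beta_iso.2.2.2.2.1.

(* Associativity is transported from matrix multiplication through the
   injective [beta], avoiding the sign bookkeeping of blade products. *)
Lemma cmulA X Y M : cmul (cmul X Y) M = cmul X (cmul Y M).
Proof. by apply: beta_inj; rewrite !betaM mulmxA. Qed.

Lemma cmulr1 X : cmul X (cone C p q) = X.
Proof. by apply: beta_inj; rewrite betaM beta1 mulmx1. Qed.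

Lemma cmul1r X : cmul (cone C p q) X = X.
Proof. by apply: beta_inj; rewrite betaM beta1 mul1mx. Qed.

Lemma blade_signA A B D :
  sign A B * sign (symdiff A B) D = sign B D * sign A (symdiff B D).
Proof.
have := cmulA (e A) (e B) (e D).
rewrite !cmul_cbasis cmulZl cmulZr !cmul_cbasis symdiffA.
move/ffunP/(_ (symdiff (symdiff A B) D)).
by rewrite !ffunE eqxx !mulr1 mulrC.
Qed.

Lemma blade_sign_symdiffl A B : sign (symdiff A B) B = sign A B * sign B B.
Proof.
have := blade_signA A B B; rewrite symdiffvv blade_sign0r mulr1 => <-.
by rewrite mulrA blade_sign_sqr mul1r.
Qed.

Lemma binvE A : binv C A = cscale (sign A A) (e A).
Proof.
set X := cscale _ _.
have eAA : cscale (sign A A) (cmul (e A) (e A)) = cone C p q.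
  apply/ffunP => D.
  by rewrite cmul_cbasis !cscaleE mulrA blade_sign_sqr mul1r symdiffvv.
have eX : cmul (e A) X = cone C p q /\ cmul X (e A) = cone C p q.
  by rewrite cmulZl cmulZr eAA.
have [_ binv_e] := epsilon_spec (inhabits (cone C p q))
  (fun Y => cmul (e A) Y = cone C p q /\ cmul Y (e A) = cone C p q) (ex_intro _ X eX).
by rewrite -[binv C A]cmulr1 -eX.1 -cmulA binv_e cmul1r.
Qed.

Lemma chermE M D : cherm M D = (M D)^* * sign D D.
Proof.
rewrite /cherm (big_morph (fun X : cl => X D) (id1 := 0) (op1 := +%R)); last first.
- by rewrite ffunE.
- by move=> X Y; rewrite ffunE.
rewrite (bigD1 D) //= big1 => [|A nA]; rewrite binvE !cscaleE cbasisE.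
  by rewrite eqxx mulr1 addr0.
by rewrite eq_sym (negbTE nA) !mulr0.
Qed.

Lemma regmxM X Y : regmx (cmul X Y) = regmx X *m regmx Y.
Proof.
by apply/row_matrixP => i; rewrite row_mul !row_regmx -cmulA clrow_cmul.
Qed.

Lemma regmx_cherm M : regmx (cherm M) = (regmx M)^t*.
Proof.
apply/matrixP => i j; rewrite !mxE chermE rmorphM /= conj_blade_sign.
rewrite [symdiff (blade j) _]symdiffC; set K := symdiff (blade i) (blade j).
rewrite -[blade j](symdiffK (blade i)) -/K blade_sign_symdiffl; ring.
Qed.

Lemma crev_cherm M : crev M = cherm (cconj (cflip (@Defs.eta C p q) M)).
Proof.
apply/ffunP => D; rewrite chermE !ffunE conjCK blade_signAA.
set x := \prod_(a in D) _.
have x2 : x ^+ 2 = 1 by rewrite expr2 -big_split big1 // => a _; apply: eta_sqr.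
by transitivity (x ^+ 2 * ((-1) ^+ 'C(#|D|, 2) * M D)); [rewrite x2 mul1r | ring].
Qed.

Let beta_image (Z : 'M[C]_N) :
  (exists M, beta M = Z) <-> (if odd n then is_blockdiag Z else True) :=
  beta_iso.2.2.2.2.2 Z.

Lemma beta0 : beta [ffun=> 0] = 0.
Proof.
apply: (@addrI _ (beta [ffun=> 0])); rewrite addr0 -betaD.
by congr beta; apply/ffunP => A; rewrite !ffunE addr0.
Qed.

Lemma beta_cbasis_sum X : beta X = \sum_i X (blade i) *: beta (e (blade i)).
Proof.
have X_sum : X = \big[@cadd C p q/[ffun=> 0]]_i cscale (X (blade i)) (e (blade i)).
  apply/ffunP => D.
  rewrite (big_morph (fun Y : cl => Y D) (id1 := 0) (op1 := +%R)) => [|Y Z|];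
    rewrite ?ffunE //.
  rewrite (bigD1 (enum_rank D)) //= big1 => [|i iD]; rewrite cscaleE cbasisE /blade.
    by rewrite enum_rankK eqxx mulr1 addr0.
  rewrite (_ : D == _ = false) ?mulr0 //.
  by apply: contraNF iD => /eqP ->; rewrite enum_valK.
rewrite {1}X_sum (big_morph beta betaD beta0); apply: eq_bigr => i _; exact: betaZ.
Qed.

Section Transfer.
Variables (k : nat) (enc : 'M[C]_N -> 'rV[C]_k) (K : 'M[C]_N -> 'M[C]_k).
Hypothesis enc_linear : linear enc.
Hypothesis enc_beta_eq0 : forall X, enc (beta X) = 0 -> beta X = 0.
Hypothesis enc_beta_onto : forall v, exists X, enc (beta X) = v.
Hypothesis enc_betaM : forall X Y, enc (beta X *m beta Y) = enc (beta X) *m K (beta Y).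

Definition encmx : 'M[C]_(#|{set 'I_n}|, k) :=
  \matrix_(i, j) enc (beta (e (blade i))) 0 j.

Lemma enc_beta X : enc (beta X) = clrow X *m encmx.
Proof.
pose encL : {linear 'M[C]_N -> 'rV[C]_k} :=
  HB.pack enc (GRing.isLinear.Build _ _ _ _ enc enc_linear).
rewrite beta_cbasis_sum -[enc]/(encL : _ -> _) linear_sum mulmx_sum_row.
apply: eq_bigr => i _; rewrite linearZ mxE; congr (_ *: _).
by apply/rowP => j; rewrite !mxE.
Qed.

Lemma encmx_free : row_free encmx.
Proof.
apply: inj_row_free => r rT0; rewrite -(clrowK r) -clrow0; congr clrow.
by apply: beta_inj; rewrite beta0; apply: enc_beta_eq0; rewrite enc_beta clrowK.
Qed.

Lemma encmx_full : row_full encmx.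
Proof.
rewrite -sub1mx; apply/row_subP => i.
by have [X <-] := enc_beta_onto (row i 1%:M); rewrite enc_beta submxMl.
Qed.

Lemma mxrank_regmx_transfer M : \rank (regmx M) = \rank (K (beta M)).
Proof.
apply: (mxrank_intertwine encmx_free encmx_full).
apply/row_matrixP => i; rewrite !row_mul row_regmx -enc_beta betaM enc_betaM enc_beta.
by rewrite clrow_cbasis -rowE.
Qed.

End Transfer.

Lemma mxrank_regmx_even M : ~~ odd n -> \rank (regmx M) = (N * \rank (beta M))%N.
Proof.
move=> n_even; rewrite -mxrank_lin_mulmxr.
apply: (@mxrank_regmx_transfer _ mxvec (fun Z => lin_mx (mulmxr Z))).
- exact: linearP.
- by move=> X /eqP; rewrite mxvec_eq0 => /eqP.
- move=> v; have [X beta_X] : exists X, beta X = vec_mx v.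
    by apply/beta_image; rewrite (negbTE n_even).
  by exists X; rewrite beta_X vec_mxK.
- by move=> X Y; rewrite mul_vec_lin.
Qed.

Lemma mxrank_regmx_odd M :
  odd n -> \rank (regmx M) = ((N %/ 2) * \rank (beta M))%N.
Proof.
move=> n_odd; set h := (N %/ 2)%N.
pose cast (Z : 'M[C]_N) := castmx (Ndim_half n_odd, Ndim_half n_odd) Z.
have cast_beta X : cast (beta X) =
    block_mx (ulsubmx (cast (beta X))) 0 0 (drsubmx (cast (beta X))).
  apply: castmx_blockdiag.
  by have := (beta_image (beta X)).1 (ex_intro _ X erefl); rewrite n_odd.
pose enc (Z : 'M[C]_N) := row_mx (mxvec (ulsubmx (cast Z))) (mxvec (drsubmx (cast Z))).
pose K (Z : 'M[C]_N) := block_mx (lin_mx (@mulmxr C h h h (ulsubmx (cast Z)))) 0 0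
                                  (lin_mx (@mulmxr C h h h (drsubmx (cast Z)))).
have rankK X : \rank (K (beta X)) = ((N %/ 2) * \rank (beta X))%N.
  rewrite rank_diag_block_mx !mxrank_lin_mulmxr -mulnDr -rank_diag_block_mx.
  by rewrite -cast_beta mxrank_castmx.
rewrite -rankK; apply: (@mxrank_regmx_transfer _ enc K).
- move=> a Y Z; rewrite /enc /cast castmx_linear /ulsubmx /drsubmx !linearP /=.
  by rewrite scale_row_mx add_row_mx.
- move=> X /eqP; rewrite row_mx_eq0 !mxvec_eq0 => /andP[/eqP ul0 /eqP dr0].
  apply/eqP; rewrite -mxrank_eq0 -(mxrank_castmx (Ndim_half n_odd)) -/(cast _).
  by rewrite cast_beta ul0 dr0 block_mx0 mxrank0.
- move=> v; pose B := block_mx (vec_mx (lsubmx v)) 0 0 (vec_mx (rsubmx v)).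
  pose B' := castmx (esym (Ndim_half n_odd), esym (Ndim_half n_odd)) B.
  have [|X beta_X] := (beta_image B').2.
    by rewrite n_odd; apply: is_blockdiag_castmx.
  exists X; rewrite /enc /cast beta_X /B' castmxKV /B block_mxKul block_mxKdr !vec_mxK.
  exact: hsubmxK.
- move=> X Y; have castM : cast (beta X *m beta Y) = cast (beta X) *m cast (beta Y).
    exact: castmx_mul.
  rewrite /enc /K castM cast_beta [cast (beta Y)]cast_beta.
  rewrite mulmx_block !mulmx0 !mul0mx !addr0 !add0r !block_mxKul !block_mxKdr.
  by rewrite mul_row_block !mulmx0 addr0 add0r !mul_vec_lin.
Qed.

Lemma mxrank_regmx_beta :
  exists2 c, (0 < c)%N & forall M, \rank (regmx M) = (c * \rank (beta M))%N.
Proof.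
have N_gt0 : (0 < N)%N by rewrite expn_gt0.
have [n_odd|n_even] := boolP (odd n); last first.
  by exists N => // M; apply: mxrank_regmx_even.
exists (N %/ 2)%N; last by move=> M; apply: mxrank_regmx_odd.
by move: N_gt0; rewrite {1}(Ndim_half n_odd) addn_gt0 orbb.
Qed.

End Isomorphism.

Theorem theorem3 (C : numClosedFieldType) (p q : nat) (Hn : (0 < p + q)%N)
  (beta : cl C p q -> 'M[C]_(Ndim p q)) (Hbeta : clifford_iso beta)
  (M : cl C p q) :
  let r := fun X => \rank (beta X) in
  r M = r (ginv M) /\
  r M = r (crev M) /\
  r M = r (cconj M) /\
  r M = r (cherm M) /\
  r M = r (cmul (cherm M) M) /\
  r M = r (cmul M (cherm M)).
Proof.
move=> r; have [c c_gt0 rank_regmx] := mxrank_regmx_beta Hbeta.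
have r_eq X : \rank (regmx X) = \rank (regmx M) -> r M = r X.
  by rewrite /r !rank_regmx => /eqP; rewrite eqn_pmul2l // => /eqP.
have neg1_sqr (a : 'I_(p + q)) : (-1 : C) * -1 = 1 by rewrite mulrNN mulr1.
split; [|split; [|split; [|split; [|split]]]]; apply: r_eq.
- by rewrite ginv_cflip mxrank_regmx_cflip.
- rewrite (crev_cherm Hbeta) (regmx_cherm Hbeta) mxrank_trmxC regmx_cconj mxrank_map.
  by rewrite mxrank_regmx_cflip //; apply: eta_sqr.
- by rewrite regmx_cconj mxrank_map.
- by rewrite (regmx_cherm Hbeta) mxrank_trmxC.
- rewrite (regmxM Hbeta) (regmx_cherm Hbeta) -{2}[regmx M]trmxCK.
  by rewrite mxrank_mul_trmxC mxrank_trmxC.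
- by rewrite (regmxM Hbeta) (regmx_cherm Hbeta) mxrank_mul_trmxC.
Qed.
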